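(* Let $\mathcal A,\mathcal B$ be finite alphabets, let $\sigma:\mathcal A^*\to\mathcal B^*$ be a non-erasing monoid morphism, and let $X\subseteq\mathcal A^{\mathbb Z}$ be a subshift. Write $\sigma=\alpha_\sigma\circ\pi_\sigma$ with $\pi_\sigma:\mathcal A^*\to\mathcal A_\sigma^*$ the subdivision morphism and $\alpha_\sigma:\mathcal A_\sigma^*\to\mathcal B^*$ the associated letter-to-letter morphism, and let $\alpha^X_\sigma:\pi_\sigma(X)\to\sigma(X)$ be the restriction/co-restriction of $\alpha_\sigma^{\mathbb Z}:\mathcal A_\sigma^{\mathbb Z}\to\mathcal B^{\mathbb Z}$. Then the following are equivalent: (1) $\sigma$ is recognizable in $X$; (2) $\alpha^X_\sigma$ is an isomorphism of subshifts (a shift-commuting homeomorphism); (3) $\alpha_\sigma$ is shift-orbit injective and shift-period preserving in $\pi_\sigma(X)$; (4) $\sigma$ is shift-orbit injective and shift-period preserving in $X$.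
   Context: A subshift $X\subseteq\mathcal A^{\mathbb Z}$ is a non-empty closed subset invariant under the shift $T$, $T(\mathbf x)_i=x_{i+1}$. A morphism $\sigma$ is non-erasing if $|\sigma(a)|\ge1$ for all letters $a$. For $\mathbf x=\ldots x_{-1}x_0x_1\ldots\in\mathcal A^{\mathbb Z}$, $\sigma^{\mathbb Z}(\mathbf x)$ is the biinfinite word whose positive half $\mathbf y_{[1,\infty)}$ is $\sigma(x_1)\sigma(x_2)\ldots$ and whose negative part is $\ldots\sigma(x_{-1})\sigma(x_0)$ (ending at index $0$). The image subshift $\sigma(X)$ is the smallest subshift containing $\sigma^{\mathbb Z}(X)$ (equivalently the union of the shift-orbits of the $\sigma^{\mathbb Z}(\mathbf x)$, $\mathbf x\in X$). Subdivision: $\mathcal A_\sigma=\{a(k): a\in\mathcal A,\ 1\le k\le|\sigma(a)|\}$, $\pi_\sigma(a)=a(1)a(2)\cdots a(|\sigma(a)|)$, and $\alpha_\sigma(a(k))$ is the $k$-th letter of $\sigma(a)$. $\sigma$ is recognizable in $X$ if: whenever $\mathbf x,\mathbf x'\in X$, $\mathbf y\in\mathcal B^{\mathbb Z}$ satisfy $\mathbf y=T^k(\sigma^{\mathbb Z}(\mathbf x))=T^\ell(\sigma^{\mathbb Z}(\mathbf x'))$ with $0\le k\le|\sigma(x_1)|-1$ and $0\le\ell\le|\sigma(x'_1)|-1$, then $\mathbf x=\mathbf x'$ and $k=\ell$. $\sigma$ is shift-orbit injective in $X$ if for $\mathbf x,\mathbf y\in X$, $\sigma^{\mathbb Z}(\mathbf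 x)$ and $\sigma^{\mathbb Z}(\mathbf y)$ lie in the same shift-orbit iff $\mathbf x,\mathbf y$ lie in the same shift-orbit. $\sigma$ is shift-period preserving in $X$ if for every periodic word $w^{\pm\infty}=\ldots www\ldots\in X$ ($w$ non-empty), $w$ is a proper power (i.e. $w=u^m$ with $m\ge2$) iff $\sigma(w)$ is a proper power. *)

From Stdlib Require Import ZArith.
From mathcomp Require Import all_boot.
Set Implicit Arguments. Unset Strict Implicit. Unset Printing Implicit Defensive.

Definition shiftn {T : Type} (k : Z) (x : Z -> T) : Z -> T := fun i => x (i + k)%Z.
Definition shift {T : Type} (x : Z -> T) : Z -> T := shiftn 1 x.

Definition agree {T : Type} (n : nat) (x y : Z -> T) : Prop :=
  forall i : Z, (Z.abs i <= Z.of_nat n)%Z -> x i = y i.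

(* closedness for the product topology (discrete alphabet) *)
Definition closedZ {T : Type} (X : (Z -> T) -> Prop) : Prop :=
  forall x, (forall n : nat, exists y, X y /\ agree n y x) -> X x.

Definition subshift {T : Type} (X : (Z -> T) -> Prop) : Prop :=
  (exists x, X x) /\ closedZ X /\ (forall x, X x <-> X (shift x)).

(* a morphism A^* -> B^* is given by the images of the letters *)
Definition nonerasing {A B : Type} (s : A -> seq B) : Prop :=
  forall a, (0 < size (s a))%N.

Definition cut (len : Z -> nat) (n : Z) : Z :=
  if (0 <=? n)%Z then Z.of_nat (\sum_(i < Z.to_nat n) len (Z.of_nat i + 1)%Z)
  else (- Z.of_nat (\sum_(i < Z.to_nat (- n)) len (- Z.of_nat i)%Z))%Z.

(* sigZ s x y  <->  y = s^Z(x): the block s(x_i) occupies positions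
   cut(i-1)+1 .. cut(i); in particular y_[1,oo) = s(x_1)s(x_2)... and the
   negative part ... s(x_-1)s(x_0) ends at index 0. *)
Definition sigZ {A B : Type} (s : A -> seq B) (x : Z -> A) (y : Z -> B) : Prop :=
  forall (i : Z) (k : nat), (k < size (s (x i)))%N ->
    y (cut (fun j => size (s (x j))) (i - 1) + 1 + Z.of_nat k)%Z
    = nth (y 0%Z) (s (x i)) k.

Definition imageZ {A B : Type} (s : A -> seq B) (X : (Z -> A) -> Prop) (y : Z -> B) : Prop :=
  exists x z k, X x /\ sigZ s x z /\ y = shiftn k z.

Definition recognizable {A B : Type} (s : A -> seq B) (X : (Z -> A) -> Prop) : Prop :=
  forall (x x' : Z -> A) (z z' : Z -> B) (k l : nat),
    X x -> X x' -> sigZ s x z -> sigZ s x' z' ->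
    (k < size (s (x 1%Z)))%N -> (l < size (s (x' 1%Z)))%N ->
    shiftn (Z.of_nat k) z = shiftn (Z.of_nat l) z' ->
    x = x' /\ k = l.

Definition same_orbit {T : Type} (x y : Z -> T) : Prop := exists k : Z, y = shiftn k x.

Definition orbit_injective {A B : Type} (s : A -> seq B) (X : (Z -> A) -> Prop) : Prop :=
  forall (x x' : Z -> A) (z z' : Z -> B), X x -> X x' -> sigZ s x z -> sigZ s x' z' ->
    (same_orbit z z' <-> same_orbit x x').

Definition proper_power {T : Type} (u : seq T) : Prop :=
  exists (v : seq T) (m : nat), (2 <= m)%N /\ u = flatten (nseq m v).

(* the periodic word w^{+-oo} for the non-empty word w = a :: w',
   (w^{+-oo})_i = w_(i mod |w|) *)
Definition perw {T : Type} (a : T) (w : seq T) : Z -> T :=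
  fun i => nth a (a :: w) (Z.to_nat (Z.modulo i (Z.of_nat (size w).+1))).

Definition period_preserving {A B : Type} (s : A -> seq B) (X : (Z -> A) -> Prop) : Prop :=
  forall (a : A) (w : seq A), X (perw a w) ->
    (proper_power (a :: w) <-> proper_power (flatten (map s (a :: w)))).

(* subdivision: A_s = { a(k) }, a(k) encoded as (a, k-1) with k-1 < |s a| *)
Definition subdiv_alph {A B : Type} (s : A -> seq B) : Type := {a : A & 'I_(size (s a))}.

Definition pi_sub {A B : Type} (s : A -> seq B) (a : A) : seq (subdiv_alph s) :=
  map (fun k => existT (fun b => 'I_(size (s b))) a k) (enum 'I_(size (s a))).

Definition alpha_letter {A B : Type} (s : A -> seq B) (p : subdiv_alph s) : B :=
  tnth (in_tuple (s (projT1 p))) (projT2 p).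

Definition alpha_morph {A B : Type} (s : A -> seq B) (p : subdiv_alph s) : seq B :=
  [:: alpha_letter p].

Definition alphaZ {A B : Type} (s : A -> seq B) (y : Z -> subdiv_alph s) : Z -> B :=
  fun i => alpha_letter (y i).

(* f restricted to S, co-restricted to S', is an isomorphism of subshifts:
   a shift-commuting homeomorphism from S onto S' *)
Definition subshift_iso {T U : Type} (S : (Z -> T) -> Prop) (S' : (Z -> U) -> Prop)
    (f : (Z -> T) -> (Z -> U)) : Prop :=
  (forall x, S x -> S' (f x)) /\
  (forall x x', S x -> S x' -> f x = f x' -> x = x') /\
  (forall y, S' y -> exists x, S x /\ f x = y) /\
  (forall x, S x -> f (shift x) = shift (f x)) /\
  (forall x, S x -> forall n, exists m, forall x', S x' -> agree m x x' -> agree n (f x) (f x')) /\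
  (forall x, S x -> forall n, exists m, forall x', S x' -> agree m (f x) (f x') -> agree n x x').

(* Recognizability amounts to orbit injectivity together with the lifting
   of periods: every period d of σ^Z(x) is the length cut(i) of the image of a period i of x
   (write d = cut(i) + k with k inside block i+1 and apply recognizability to T^i x and x).
   Lifted periods give period preservation, since a period of σ(w)^{±∞} strictly between 0 and
   |σ(w)| lifts to a period of w^{±∞} strictly between 0 and |w|.  Conversely, if σ is orbit
   injective and σ^Z(x) is periodic then so is x: otherwise the orbit closure of x, mapped into
   the finite orbit of σ^Z(x), would be the orbit of x, a countable compact set without
   isolated points.  Period preservation then lifts periods by descent on a period of x.
   Every letter a(k) of the subdivision records its position in its block, so π_σ is
   recognizable, and recognizability of σ = α_σ ∘ π_σ means injectivity of α_σ on π_σ(X),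
   which is recognizability of the letter-to-letter α_σ; by compactness an injective
   letter-to-letter map on a subshift has a continuous inverse. *)

From Pilot Require Import Defs.
From Stdlib Require Import ZArith Lia FunctionalExtensionality ClassicalEpsilon Classical.
From mathcomp Require Import all_boot zify.

Set Implicit Arguments.
Unset Strict Implicit.
Unset Printing Implicit Defensive.

(** * Block decomposition of Z *)

Lemma cut0 (L : Z -> nat) : cut L 0 = 0%Z.
Proof. by rewrite /cut /= big_ord0. Qed.

Lemma cutS (L : Z -> nat) (n : Z) : cut L n = (cut L (n - 1) + Z.of_nat (L n))%Z.
Proof.
rewrite /cut; case: (Z.leb_spec 0 n) => n_ge0.
- case: (Z.leb_spec 0 (n - 1)) => n1_ge0.
  + have -> : Z.to_nat n = (Z.to_nat (n - 1)).+1 by lia.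
    rewrite big_ord_recr /= Nat2Z.inj_add.
    by have -> : (Z.of_nat (Z.to_nat (n - 1)) + 1 = n)%Z by lia.
  + have -> : n = 0%Z by lia.
    rewrite /= big_ord0 big_ord_recr /= big_ord0 /=; lia.
- case: (Z.leb_spec 0 (n - 1)) => n1_ge0; first lia.
  have -> : Z.to_nat (- (n - 1)) = (Z.to_nat (- n)).+1 by lia.
  rewrite big_ord_recr /= Nat2Z.inj_add.
  have -> : (- Z.of_nat (Z.to_nat (- n)))%Z = n by lia.
  lia.
Qed.

Lemma cut_const1 (n : Z) : cut (fun _ => 1%N) n = n.
Proof.
elim/Z.peano_ind: n => [|n IHn|n IHn]; first exact: cut0.
- by rewrite cutS (_ : Z.succ n - 1 = n)%Z ?IHn; lia.
- by move: IHn; rewrite (cutS _ n) -Z.sub_1_r; lia.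
Qed.

Lemma cut_shiftl (L : Z -> nat) (i n : Z) :
  cut (fun j => L (j + i)%Z) n = (cut L (n + i) - cut L i)%Z.
Proof.
elim/Z.peano_ind: n => [|n IHn|n IHn]; first by rewrite cut0 /=; lia.
- rewrite cutS (cutS L (Z.succ n + i)).
  have -> : (Z.succ n - 1 = n)%Z by lia.
  have -> : (Z.succ n + i - 1 = n + i)%Z by lia.
  lia.
- move: IHn; rewrite (cutS _ n) (cutS L (n + i)) -Z.sub_1_r.
  have -> : (n + i - 1 = n - 1 + i)%Z by lia.
  lia.
Qed.

Section Blocks.
Variable L : Z -> nat.
Hypothesis L_gt0 : forall j, (0 < L j)%N.

Lemma cut_gap i j : (i <= j)%Z -> (j - i <= cut L j - cut L i)%Z.
Proof.
move=> le_ij; have -> : j = (i + Z.of_nat (Z.to_nat (j - i)))%Z by lia.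
elim: (Z.to_nat (j - i)) => [|d IHd]; first by rewrite Z.add_0_r; lia.
rewrite (cutS L (i + _)); have := L_gt0 (i + Z.of_nat d.+1)%Z.
have -> : (i + Z.of_nat d.+1 - 1 = i + Z.of_nat d)%Z by lia.
lia.
Qed.

Lemma cut_lt i j : (i < j)%Z -> (cut L i < cut L j)%Z.
Proof. by move=> lt_ij; have := cut_gap (Z.lt_le_incl _ _ lt_ij); lia. Qed.

Lemma cut_le i j : (i <= j)%Z -> (cut L i <= cut L j)%Z.
Proof. by move=> le_ij; have := cut_gap le_ij; lia. Qed.

Lemma cut_block p : exists i, (cut L (i - 1) < p <= cut L i)%Z.
Proof.
elim/Z.peano_ind: p => [|p [i Hi]|p [i Hi]].
- by exists 0%Z; have := @cut_lt (0 - 1) 0 ltac:(lia); rewrite cut0; lia.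
- have [p_lt|p_eq] : (Z.succ p <= cut L i \/ p = cut L i)%Z by lia.
    by exists i; lia.
  exists (i + 1)%Z; have := @cut_lt i (i + 1) ltac:(lia).
  by rewrite (_ : i + 1 - 1 = i)%Z; lia.
- have [p_gt|p_eq] : (cut L (i - 1) < Z.pred p \/ Z.pred p = cut L (i - 1))%Z by lia.
    by exists i; lia.
  by exists (i - 1)%Z; have := @cut_lt (i - 1 - 1) (i - 1) ltac:(lia); lia.
Qed.

Lemma cut_block_uniq p i j :
  (cut L (i - 1) < p <= cut L i)%Z -> (cut L (j - 1) < p <= cut L j)%Z -> i = j.
Proof.
move=> Hi Hj; case: (Z.lt_total i j) => [lt_ij|[//|lt_ji]].
- by have := @cut_le i (j - 1) ltac:(lia); lia.
- by have := @cut_le j (i - 1) ltac:(lia); lia.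
Qed.

Lemma block_index_abs_le p i : (cut L (i - 1) < p <= cut L i)%Z -> (Z.abs i <= Z.abs p)%Z.
Proof.
move=> Hp; have := cut0 L; case: (Z.leb_spec i 0) => Hi.
- by have := cut_gap Hi; lia.
- by have := @cut_gap 0 (i - 1); lia.
Qed.

Lemma block_pos p : exists i k, (k < L i)%N /\ p = (cut L (i - 1) + 1 + Z.of_nat k)%Z.
Proof.
have [i Hi] := cut_block p; rewrite (cutS L i) in Hi.
by exists i, (Z.to_nat (p - cut L (i - 1) - 1)); split; lia.
Qed.

Lemma block_pos_inj i k i' k' : (k < L i)%N -> (k' < L i')%N ->
  (cut L (i - 1) + 1 + Z.of_nat k)%Z = (cut L (i' - 1) + 1 + Z.of_nat k')%Z ->
  i = i' /\ k = k'.
Proof.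
move=> lt_k lt_k' E.
have Ei : i = i'.
  apply: (@cut_block_uniq (cut L (i - 1) + 1 + Z.of_nat k)%Z); rewrite ?E.
  - by rewrite (cutS L i); lia.
  - by rewrite (cutS L i'); lia.
by subst i'; split; lia.
Qed.

Lemma cut_offset j : exists i k, (k < L (i + 1))%N /\ j = (cut L i + Z.of_nat k)%Z.
Proof.
have [i [k [lt_k Ej]]] := block_pos (j + 1)%Z.
by exists (i - 1)%Z, k; rewrite Z.sub_add; split; lia.
Qed.

End Blocks.

(** * Shifts, periods and images *)

Section Shifts.
Variable T : Type.
Implicit Types (f g : Z -> T) (a b p q : Z).

Lemma shiftn_add a b f : shiftn a (shiftn b f) = shiftn (a + b) f.
Proof. by apply: functional_extensionality => i; rewrite /shiftn Z.add_assoc. Qed.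

Lemma shiftn0 f : shiftn 0 f = f.
Proof. by apply: functional_extensionality => i; rewrite /shiftn Z.add_0_r. Qed.

Lemma shiftnK a f : shiftn (- a) (shiftn a f) = f.
Proof. by rewrite shiftn_add Z.add_opp_diag_l shiftn0. Qed.

Lemma shiftn_inj a : injective (@shiftn T a).
Proof. by move=> f g /(congr1 (shiftn (- a))); rewrite !shiftnK. Qed.

Lemma periodE p f : shiftn p f = f -> forall i, f (i + p)%Z = f i.
Proof. by move=> fp i; rewrite -{2}fp. Qed.

Lemma periodN p f : shiftn p f = f -> shiftn (- p) f = f.
Proof. by move=> fp; rewrite -{1}fp shiftnK. Qed.

Lemma periodD p q f : shiftn p f = f -> shiftn q f = f -> shiftn (p + q) f = f.
Proof. by move=> fp fq; rewrite -shiftn_add fq fp. Qed.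

Lemma periodM p f : shiftn p f = f -> forall t, shiftn (t * p) f = f.
Proof.
move=> fp; elim/Z.peano_ind => [|t IHt|t IHt]; first exact: shiftn0.
- by rewrite Z.mul_succ_l periodD.
- by rewrite Z.mul_pred_l -Z.add_opp_r periodD ?periodN.
Qed.

Lemma period_gcd p q f : shiftn p f = f -> shiftn q f = f -> shiftn (Z.gcd p q) f = f.
Proof.
move=> fp fq; have [u [v <-]] := Z.gcd_bezout p q _ erefl.
by apply: periodD; apply: periodM.
Qed.

Lemma period_mod p a f : (0 < p)%Z -> shiftn p f = f -> shiftn (a mod p) f = shiftn a f.
Proof.
move=> p_gt0 fp; have Ea := Z.div_mod a p (Z.neq_sym _ _ (Z.lt_neq _ _ p_gt0)).
by rewrite {2}Ea Z.add_comm -shiftn_add Z.mul_comm periodM.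
Qed.

Lemma period_abs p f : shiftn p f = f -> shiftn (Z.abs p) f = f.
Proof. by move=> fp; case: (Z.abs_eq_or_opp p) => ->; rewrite ?periodN. Qed.

End Shifts.

Lemma subshift_shiftn (T : Type) (X : (Z -> T) -> Prop) x k :
  subshift X -> X x -> X (shiftn k x).
Proof.
move=> [_ [_ X_shift]] Xx; elim/Z.peano_ind: k => [|k IHk|k IHk]; first by rewrite shiftn0.
- by rewrite -Z.add_1_l -shiftn_add; apply: (X_shift _).1.
- apply: (X_shift _).2; rewrite /Defs.shift shiftn_add.
  by rewrite (_ : 1 + Z.pred k = k)%Z //; lia.
Qed.

Section Agree.
Variable T : Type.
Implicit Types u v w : Z -> T.

Lemma agree_sym r u v : agree r u v -> agree r v u.
Proof. by move=> uv i Hi; rewrite uv. Qed.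

Lemma agree_trans r u v w : agree r u v -> agree r v w -> agree r u w.
Proof. by move=> uv vw i Hi; rewrite uv ?vw. Qed.

Lemma agree_le r r' u v : (r <= r')%N -> agree r' u v -> agree r u v.
Proof. by move=> le_r uv i Hi; apply: uv; lia. Qed.

Lemma agree_shiftn r c u v :
  agree (r + Z.to_nat (Z.abs c)) u v -> agree r (shiftn c u) (shiftn c v).
Proof. by move=> uv i Hi; apply: uv; lia. Qed.

Lemma agree_all_eq u v : (forall r, agree r u v) -> u = v.
Proof.
by move=> uv; apply: functional_extensionality => i; apply: (uv (Z.to_nat (Z.abs i))); lia.
Qed.

End Agree.

Lemma cut_agree (L L' : Z -> nat) (R : nat) :
  (forall j, (Z.abs j <= Z.of_nat R)%Z -> L j = L' j) ->
  forall j, (- Z.of_nat R - 1 <= j <= Z.of_nat R)%Z -> cut L j = cut L' j.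
Proof.
move=> LL' j Hj; have cut0L := cut0 L; have cut0L' := cut0 L'.
case: (Z.leb_spec 0 j) => j_ge0.
- have -> : j = Z.of_nat (Z.to_nat j) by lia.
  have : (Z.to_nat j <= R)%N by lia.
  elim: (Z.to_nat j) => [|n IHn] le_nR; first by rewrite cut0L cut0L'.
  rewrite (cutS L) (cutS L') (_ : Z.of_nat n.+1 - 1 = Z.of_nat n)%Z; last lia.
  by rewrite IHn ?LL'; lia.
- have -> : j = (- Z.of_nat (Z.to_nat (- j)))%Z by lia.
  have : (Z.to_nat (- j) <= R.+1)%N by lia.
  elim: (Z.to_nat (- j)) => [|n IHn] le_nR; first by rewrite /= cut0L cut0L'.
  have := cutS L (- Z.of_nat n); have := cutS L' (- Z.of_nat n).
  rewrite (_ : - Z.of_nat n.+1 = - Z.of_nat n - 1)%Z; last lia.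
  by rewrite LL'; [move: (IHn (ltnW le_nR)); lia | lia].
Qed.

Section SigmaZ.
Variables (A B : Type) (s : A -> seq B).

Definition blen (x : Z -> A) : Z -> nat := fun j => size (s (x j)).

Lemma sigZ_shiftn x z i : sigZ s x z -> sigZ s (shiftn i x) (shiftn (cut (blen x) i) z).
Proof.
move=> xz j k lt_k; rewrite /shiftn (cut_shiftl (blen x)).
have -> : (cut (blen x) (j - 1 + i) - cut (blen x) i + 1 + Z.of_nat k + cut (blen x) i
           = cut (blen x) (j + i - 1) + 1 + Z.of_nat k)%Z.
  by rewrite (_ : j + i - 1 = j - 1 + i)%Z; lia.
by rewrite (xz (j + i)%Z k lt_k); apply: set_nth_default.
Qed.

Lemma cut_period x N : shiftn N x = x ->
  forall n, cut (blen x) (n + N) = (cut (blen x) n + cut (blen x) N)%Z.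
Proof.
move=> xN n; have E : (fun j => blen x (j + N)) = blen x by rewrite -{2}xN.
by have := cut_shiftl (blen x) N n; rewrite E; lia.
Qed.

Lemma cut_periodM x N : shiftn N x = x ->
  forall t, cut (blen x) (t * N) = (t * cut (blen x) N)%Z.
Proof.
move=> xN; elim/Z.peano_ind => [|t IHt|t IHt]; first by rewrite cut0.
- by rewrite Z.mul_succ_l cut_period // IHt; lia.
- rewrite -(Z.sub_add N (t * N)) cut_period // in IHt.
  by rewrite Z.mul_pred_l Z.mul_pred_l; lia.
Qed.

Hypothesis s_ne : nonerasing s.

Lemma blen_gt0 x j : (0 < blen x j)%N.
Proof. exact: s_ne. Qed.

Lemma sigZ_uniq x z z' : sigZ s x z -> sigZ s x z' -> z = z'.
Proof.
move=> xz xz'; apply: functional_extensionality => p.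
have [i [k [lt_k ->]]] := block_pos (blen_gt0 x) p.
by rewrite (xz i k lt_k) (xz' i k lt_k); apply: set_nth_default.
Qed.

Lemma sigZ_ex x : exists z, sigZ s x z.
Proof.
have := s_ne (x 0%Z); case: (s (x 0%Z)) => [|b _] //= _.
have letter_at p : exists c, forall i k, (k < blen x i)%N ->
    p = (cut (blen x) (i - 1) + 1 + Z.of_nat k)%Z -> c = nth b (s (x i)) k.
  have [i [k [lt_k Ep]]] := block_pos (blen_gt0 x) p.
  exists (nth b (s (x i)) k) => i' k' lt_k' Ep'; rewrite Ep in Ep'.
  by have [<- <-] := block_pos_inj (blen_gt0 x) lt_k lt_k' Ep'.
have [z Hz] := choice _ letter_at.
by exists z => i k lt_k; rewrite (Hz _ i k lt_k erefl); apply: set_nth_default.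
Qed.

Lemma sigZ_shiftn_offset x z j : sigZ s x z -> exists i k,
  [/\ (k < size (s (shiftn i x 1%Z)))%N, sigZ s (shiftn i x) (shiftn (cut (blen x) i) z),
      j = (cut (blen x) i + Z.of_nat k)%Z
    & shiftn (Z.of_nat k) (shiftn (cut (blen x) i) z) = shiftn j z].
Proof.
move=> xz; have [i [k [lt_k Ej]]] := cut_offset (blen_gt0 x) j.
exists i, k; split=> //; first by rewrite /shiftn Z.add_comm.
- exact: sigZ_shiftn.
- by rewrite shiftn_add Ej Z.add_comm.
Qed.

Lemma sigZ_period x z N : sigZ s x z -> shiftn N x = x -> shiftn (cut (blen x) N) z = z.
Proof. by move=> xz xN; apply: (sigZ_uniq _ xz); rewrite -{1}xN; apply: sigZ_shiftn. Qed.

Lemma sigZ_agree x x' z z' R : sigZ s x z -> sigZ s x' z' -> agree R x x' -> agree R z z'.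
Proof.
move=> xz x'z' xx' p Hp.
have [i [k [lt_k Ep]]] := block_pos (blen_gt0 x) p.
have Hi : (Z.abs i <= Z.of_nat R)%Z.
  have := @block_index_abs_le _ (blen_gt0 x) p i; rewrite (cutS (blen x) i); lia.
have Ecut : cut (blen x) (i - 1) = cut (blen x') (i - 1).
  by apply: (cut_agree (R := R)) => [j Hj|]; [rewrite /blen xx' | lia].
have Exi : x i = x' i by apply: xx'.
have lt_k' : (k < blen x' i)%N by rewrite /blen -Exi.
by rewrite Ep (xz i k lt_k) Ecut (x'z' i k lt_k') Exi; apply: set_nth_default.
Qed.

End SigmaZ.

(** * Compactness and the image subshift *)

Lemma nat_dependent_choice (T : Type) (P : nat -> T -> Prop) (R : nat -> T -> T -> Prop) :
  (exists a, P 0 a) -> (forall t a, P t a -> exists b, P t.+1 b /\ R t a b) ->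
  exists f : nat -> T, forall t, P t (f t) /\ R t (f t) (f t.+1).
Proof.
move=> /constructive_indefinite_description [a0 Pa0] step.
have {}step t (a : {a | P t a}) : {b | P t.+1 b /\ R t (sval a) b}.
  exact/constructive_indefinite_description/(step t _ (svalP a)).
pose fix F t : {a | P t a} :=
  if t is t'.+1 then exist _ (sval (step t' (F t'))) (svalP (step t' (F t'))).1
  else exist _ a0 Pa0.
by exists (fun t => sval (F t)) => t; split; [exact: svalP | exact: (svalP (step t (F t))).2].
Qed.

Definition infinitely_often (P : nat -> Prop) : Prop := forall N, exists n, (N <= n)%N /\ P n.

Lemma infinitely_often_T : infinitely_often (fun _ => True).
Proof. by move=> N; exists N. Qed.

Lemma infinite_pigeonhole (K : finType) (P : nat -> Prop) (h : nat -> K) :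
  infinitely_often P -> exists k, infinitely_often (fun n => P n /\ h n = k).
Proof.
move=> infP; apply: NNPP => noK.
have bound k : exists N, forall n, (N <= n)%N -> P n -> h n <> k.
  apply: NNPP => unbounded; apply: noK; exists k => N; apply: NNPP => none.
  by apply: unbounded; exists N => n le_Nn Pn hn; apply: none; exists n.
have [Nk HNk] := choice _ bound.
have [n [le_n Pn]] := infP (\max_(k : K) Nk k).
by apply: (HNk (h n) n) => //; apply: leq_trans le_n; apply: leq_bigmax.
Qed.

Lemma antitone_finite_choice (K : finType) (P : nat -> K -> Prop) :
  (forall r r' k, (r <= r')%N -> P r' k -> P r k) ->
  (forall r, exists k, P r k) -> exists k, forall r, P r k.
Proof.
move=> P_anti /choice [c Pc].
have [k infk] := infinite_pigeonhole c infinitely_often_T.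
by exists k => r; have [n [le_rn [_ <-]]] := infk r; apply: P_anti le_rn _.
Qed.

Lemma agree_chain_limit (T : Type) (g : nat -> Z -> T) (r : nat -> nat) :
  (forall t, t <= r t)%N -> (forall t, r t <= r t.+1)%N ->
  (forall t, agree (r t) (g t) (g t.+1)) ->
  exists y, forall t, agree (r t) y (g t).
Proof.
move=> r_ge r_mono g_step.
have r_le t d : (r t <= r (t + d))%N.
  by elim: d => [|d IHd]; rewrite ?addn0 // addnS (leq_trans IHd).
have chain t d : agree (r t) (g t) (g (t + d)).
  elim: d => [|d IHd]; first by rewrite addn0.
  by apply: agree_trans IHd _; rewrite addnS; apply: agree_le (r_le t d) (g_step _).
exists (fun i => g (Z.to_nat (Z.abs i)) i) => t i Hi.
set u := Z.to_nat (Z.abs i); case: (leqP u t) => [le_ut|lt_tu].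
- have := chain u (t - u); rewrite subnKC // => ut; apply: ut.
  by have := r_ge u; rewrite /u; lia.
- by have := chain t (u - t); rewrite subnKC ?(ltnW lt_tu) // => tu; rewrite tu.
Qed.

Lemma cluster_point (A : finType) (f : nat -> Z -> A) (Q : nat -> Prop) :
  infinitely_often Q ->
  exists y, forall r, infinitely_often (fun n => Q n /\ agree r (f n) y).
Proof.
move=> infQ; pose Inf r g := infinitely_often (fun n => Q n /\ agree r (f n) g).
have Inf0 : exists g, Inf 0 g.
  have [a Ha] := infinite_pigeonhole (fun n => f n 0%Z) infQ.
  exists (fun _ => a) => N; have [n [le_n [Qn fn0]]] := Ha N.
  by exists n; do 2!split=> //; move=> i Hi; rewrite (_ : i = 0%Z) //; lia.
have InfS r g : Inf r g -> exists g', Inf r.+1 g' /\ agree r g g'.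
  move=> Hg; have [[a b] Hab] := infinite_pigeonhole
    (fun n => (f n (- Z.of_nat r.+1)%Z, f n (Z.of_nat r.+1))) Hg.
  exists (fun i => if (i =? - Z.of_nat r.+1)%Z then a
                   else if (i =? Z.of_nat r.+1)%Z then b else g i).
  split=> [N|i Hi]; last by case: Z.eqb_spec => [?|_]; [lia | case: Z.eqb_spec => [?|_] //; lia].
  have [n [le_n [[Qn fng] Eab]]] := Hab N; exists n; split=> //; split=> // i Hi.
  move: Eab => [= <- <-].
  case: Z.eqb_spec => [->//|ne1]; case: Z.eqb_spec => [->//|ne2].
  by apply: fng; lia.
have [G HG] := nat_dependent_choice Inf0 InfS.
have [y Hy] := agree_chain_limit (g := G) (r := id) (fun t => leqnn t) (fun t => leqnSn t)
  (fun t => (HG t).2).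
exists y => r N; have [n [le_n [Qn fnG]]] := (HG r).1 N.
by exists n; do 2!split=> //; apply: agree_trans fnG (agree_sym (Hy r)).
Qed.

Lemma closed_cluster_point (A : finType) (X : (Z -> A) -> Prop) (f : nat -> Z -> A)
    (Q : nat -> Prop) :
  closedZ X -> (forall n, Q n -> X (f n)) -> infinitely_often Q ->
  exists y, X y /\ forall r, infinitely_often (fun n => Q n /\ agree r (f n) y).
Proof.
move=> X_closed Xf infQ; have [y Hy] := cluster_point f infQ.
exists y; split=> // ; apply: X_closed => r.
by have [n [_ [Qn fy]]] := Hy r 0%N; exists (f n); split; [exact: Xf|].
Qed.

Section Image.
Variables (A B : Type) (s : A -> seq B) (X : (Z -> A) -> Prop).

Lemma imageZ_shiftn y c : imageZ s X y -> imageZ s X (shiftn c y).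
Proof. by move=> [x [z [j [Xx [xz ->]]]]]; exists x, z, (c + j)%Z; rewrite shiftn_add. Qed.

Hypothesis s_ne : nonerasing s.
Hypothesis X_sub : subshift X.

Lemma imageZ_canonical y : imageZ s X y ->
  exists x z k, [/\ X x, sigZ s x z, (k < size (s (x 1%Z)))%N & y = shiftn (Z.of_nat k) z].
Proof.
move=> [x0 [z0 [j [Xx0 [x0z0 ->]]]]].
have [i [k [lt_k xiz _ <-]]] := sigZ_shiftn_offset s_ne j x0z0.
by exists (shiftn i x0), (shiftn (cut (blen s x0) i) z0), k; split=> //; apply: subshift_shiftn.
Qed.

End Image.

Section ImageSubshift.
Variables (A : finType) (B : Type) (s : A -> seq B) (X : (Z -> A) -> Prop).
Hypothesis s_ne : nonerasing s.
Hypothesis X_sub : subshift X.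

Lemma imageZ_closed : closedZ (imageZ s X).
Proof.
move=> y approx.
have canon n : exists p : (Z -> A) * (Z -> B) * nat, [/\ X p.1.1, sigZ s p.1.1 p.1.2,
    (p.2 < size (s (p.1.1 1%Z)))%N & agree n (shiftn (Z.of_nat p.2) p.1.2) y].
  have [y' [Iy' y'y]] := approx n.
  have [x [z [k [Xx xz lt_k Ey']]]] := imageZ_canonical s_ne X_sub Iy'.
  by exists (x, z, k); rewrite /= -Ey'.
have [F HF] := choice _ canon.
pose Lmax := \max_(a : A) size (s a).
have [k Hk] := infinite_pigeonhole (fun n => inord (F n).2 : 'I_Lmax.+1) infinitely_often_T.
pose Q n := (F n).2 = k.
have infQ : infinitely_often Q.
  move=> N; have [n [le_n [_ Fnk]]] := Hk N; exists n; split=> //; rewrite /Q -Fnk inordK //.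
  have [_ _ lt_k _] := HF n; rewrite ltnS; apply: leq_trans (ltnW lt_k) _.
  exact: (@leq_bigmax A (fun a => size (s a))).
have XF n : Q n -> X (F n).1.1 by case: (HF n).
have [x [Xx Hx]] := closed_cluster_point X_sub.2.1 XF infQ.
have [z xz] := sigZ_ex s_ne x.
exists x, z, (Z.of_nat k); split=> //; split=> //.
apply: agree_all_eq => r.
have [n [le_rn [Qn Fnx]]] := Hx (r + k)%N r.
have [_ Fz _ Fy] := HF n.
apply: agree_trans (agree_sym (agree_le le_rn Fy)) _; rewrite Qn.
apply: agree_shiftn; rewrite (_ : Z.to_nat _ = k); last lia.
exact: sigZ_agree Fz xz Fnx.
Qed.

Lemma imageZ_subshift : subshift (imageZ s X).
Proof.
split; [|split].
- have [x Xx] := X_sub.1; have [z xz] := sigZ_ex s_ne x.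
  by exists z, x, z, 0%Z; rewrite shiftn0.
- exact: imageZ_closed.
- move=> y; split=> [|Iy]; first exact: imageZ_shiftn.
  by have := imageZ_shiftn (-1) Iy; rewrite /Defs.shift shiftn_add /= shiftn0.
Qed.

End ImageSubshift.

(** * Periodic images of orbit-injective morphisms *)

Section AperiodicPreimage.
Variables (A : finType) (B : Type) (s : A -> seq B) (X : (Z -> A) -> Prop).
Hypotheses (s_ne : nonerasing s) (X_sub : subshift X) (s_orb : orbit_injective s X).
Variables (x : Z -> A) (z : Z -> B) (p : Z).
Hypotheses (Xx : X x) (xz : sigZ s x z) (p_gt0 : (0 < p)%Z) (zp : shiftn p z = z).
Hypothesis x_aperiodic : forall q, shiftn q x = x -> q = 0%Z.

Lemma shiftn_aperiodic_inj a b : shiftn a x = shiftn b x -> a = b.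
Proof.
move=> /(congr1 (shiftn (- b))); rewrite shiftnK shiftn_add => /x_aperiodic; lia.
Qed.

(* σ maps the orbit closure of x into that of z, which is the finite orbit of the periodic z;
   orbit injectivity brings this back to the orbit of x. *)
Lemma orbit_closed y : (forall r, exists m, agree r y (shiftn m x)) -> exists j, y = shiftn j x.
Proof.
move=> y_lim.
have Xy : X y.
  apply: X_sub.2.1 => r; have [m ym] := y_lim r.
  by exists (shiftn m x); split; [exact: subshift_shiftn | exact: agree_sym].
have [zy yzy] := sigZ_ex s_ne y.
have near r : exists c : 'I_(Z.to_nat p), agree r zy (shiftn (Z.of_nat c) z).
  have [m ym] := y_lim r; set c := (cut (blen s x) m mod p)%Z.
  have c_bound : (0 <= c < p)%Z by apply: Z.mod_pos_bound.
  have lt_c : (Z.to_nat c < Z.to_nat p)%N by lia.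
  exists (Ordinal lt_c) => /=; rewrite Z2Nat.id; last lia.
  rewrite /c period_mod //.
  exact (sigZ_agree s_ne yzy (sigZ_shiftn (i := m) xz) ym).
have [c Hc] := antitone_finite_choice (fun r r' c le_r => @agree_le _ r r' _ _ le_r) near.
have [k Ek] : same_orbit y x.
  apply/(s_orb Xy Xx yzy xz); exists (- Z.of_nat c)%Z.
  by rewrite (agree_all_eq Hc) shiftnK.
by exists (- k)%Z; rewrite Ek shiftnK.
Qed.

Lemma orbit_recurrent m r : exists m', m' <> m /\ agree r (shiftn m x) (shiftn m' x).
Proof.
have [y Hy] := cluster_point (fun n => shiftn (Z.of_nat n) x) infinitely_often_T.
have [j Ej] : exists j, y = shiftn j x.
  apply: orbit_closed => r'; have [n [_ [_ Hn]]] := Hy r' 0%N.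
  by exists (Z.of_nat n); apply: agree_sym.
have [n [lt_jn [_ Hn]]] := Hy (r + Z.to_nat (Z.abs (m - j)))%N (Z.to_nat j).+1.
move: (agree_shiftn Hn); rewrite Ej !shiftn_add (_ : m - j + j = m)%Z; last lia.
by exists (m - j + Z.of_nat n)%Z; split; [lia | apply: agree_sym].
Qed.

Lemma orbit_avoid m r j : exists m' r',
  [/\ (r < r')%N, agree r (shiftn m x) (shiftn m' x) & ~ agree r' (shiftn m' x) (shiftn j x)].
Proof.
have [m1 [ne_m1 agr1]] := orbit_recurrent m r.
have [m2 [agr2 ne2]] : exists m2, agree r (shiftn m x) (shiftn m2 x) /\ shiftn m2 x <> shiftn j x.
  case: (classic (shiftn m x = shiftn j x)) => [Emj|]; last by exists m.
  by exists m1; split=> // Em1; apply: ne_m1; apply: shiftn_aperiodic_inj; rewrite Em1 Emj.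
have [i ne_i] : exists i, shiftn m2 x i <> shiftn j x i.
  apply: NNPP => all_eq; apply: ne2; apply: functional_extensionality => i.
  by apply: NNPP => ne_i; apply: all_eq; exists i.
exists m2, (maxn r (Z.to_nat (Z.abs i))).+1; split=> [||agr]; [lia | exact: agr2 |].
by apply: ne_i; apply: agr; lia.
Qed.

(* The orbit of x is closed and has no isolated point, so cylinders chosen at stage t to avoid
   T^t x and T^-t x shrink to a point of its closure outside it. *)
Lemma aperiodic_preimage_contra : False.
Proof.
pose P t (q : Z * nat) := (t <= q.2)%N.
pose R t (q q' : Z * nat) := [/\ (q.2 < q'.2)%N, agree q.2 (shiftn q.1 x) (shiftn q'.1 x),
  ~ agree q'.2 (shiftn q'.1 x) (shiftn (Z.of_nat t) x)
  & ~ agree q'.2 (shiftn q'.1 x) (shiftn (- Z.of_nat t) x)].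
have step t q : P t q -> exists q', P t.+1 q' /\ R t q q'.
  rewrite /P => Pq; have [m1 [r1 [lt1 agr1 nagr1]]] := orbit_avoid q.1 q.2 (Z.of_nat t).
  have [m2 [r2 [lt2 agr2 nagr2]]] := orbit_avoid m1 r1 (- Z.of_nat t).
  exists (m2, r2); rewrite /P /R /=; split; first lia.
  split=> [||agr|//]; first lia.
  - exact: agree_trans agr1 (agree_le (ltnW lt1) agr2).
  - by apply: nagr1; apply: agree_trans agr2 (agree_le (ltnW lt2) agr).
have [f Hf] := nat_dependent_choice (ex_intro (P 0) (0%Z, 0%N) (leq0n 0)) step.
have [y Hy] := agree_chain_limit (g := fun t => shiftn (f t).1 x) (r := fun t => (f t).2)
  (fun t => (Hf t).1) (fun t => let: And4 lt_r _ _ _ := (Hf t).2 in ltnW lt_r)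
  (fun t => let: And4 _ agr _ _ := (Hf t).2 in agr).
have [j Ej] : exists j, y = shiftn j x.
  by apply: orbit_closed => r; exists (f r).1; apply: agree_le (Hf r).1 (Hy r).
have [_ _ nagr_pos nagr_neg] := (Hf (Z.to_nat (Z.abs j))).2.
have := Hy (Z.to_nat (Z.abs j)).+1; rewrite Ej => /agree_sym agr.
case: (Z.leb_spec 0 j) => j_sign.
- by apply: nagr_pos; rewrite (_ : Z.of_nat _ = j) //; lia.
- by apply: nagr_neg; rewrite (_ : (- Z.of_nat _)%Z = j) //; lia.
Qed.

End AperiodicPreimage.

Lemma orbit_injective_periodic (A : finType) (B : Type) (s : A -> seq B) (X : (Z -> A) -> Prop)
    x z p :
  nonerasing s -> subshift X -> orbit_injective s X ->
  X x -> sigZ s x z -> p <> 0%Z -> shiftn p z = z -> exists q, q <> 0%Z /\ shiftn q x = x.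
Proof.
move=> s_ne X_sub s_orb Xx xz p_neq0 zp; apply: NNPP => x_aperiodic.
apply: (aperiodic_preimage_contra s_ne X_sub s_orb Xx xz (p := Z.abs p)).
- lia.
- exact: period_abs.
- by move=> q xq; apply: NNPP => q_neq0; apply: x_aperiodic; exists q.
Qed.

(** * Windows and powers *)

Section Words.
Variable T : Type.
Implicit Types (f g : Z -> T) (u v w : seq T).

Definition win f (c : Z) (n : nat) : seq T := mkseq (fun q => f (c + Z.of_nat q)%Z) n.

Lemma size_win f c n : size (win f c n) = n.
Proof. exact: size_mkseq. Qed.

Lemma nth_win f c n d q : (q < n)%N -> nth d (win f c n) q = f (c + Z.of_nat q)%Z.
Proof. exact: nth_mkseq. Qed.

Lemma win_rcons f c n : win f c n.+1 = rcons (win f c n) (f (c + Z.of_nat n)%Z).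
Proof. exact: mkseqS. Qed.

Lemma winD f c m n : win f c (m + n) = win f c m ++ win f (c + Z.of_nat m) n.
Proof.
apply: (eq_from_nth (x0 := f c)) => [|q]; first by rewrite size_cat !size_win.
rewrite size_win => lt_q; rewrite nth_cat size_win nth_win //.
case: ltnP => [lt_qm|le_mq]; first by rewrite nth_win.
by rewrite nth_win; [congr f | ]; lia.
Qed.

Lemma size_flatten_nseq u m : size (flatten (nseq m u)) = (m * size u)%N.
Proof. by elim: m => //= m IHm; rewrite size_cat IHm mulSn. Qed.

Lemma nth_flatten_nseq d u m q : (q < m * size u)%N ->
  nth d (flatten (nseq m u)) q = nth d u (q %% size u).
Proof.
elim: m q => [|m IHm] q /=; first by rewrite mul0n.
rewrite mulSn nth_cat => lt_q; case: ltnP => [lt_qu|le_uq]; first by rewrite modn_small.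
by rewrite IHm ; [rewrite -{2}(subnK le_uq) modnDr | lia].
Qed.

Lemma win_periodic_power f c n k : (0 < k)%N -> (k %| n)%N ->
  shiftn (Z.of_nat k) f = f -> win f c n = flatten (nseq (n %/ k) (win f c k)).
Proof.
move=> k_gt0 k_dvd fk; have size_n : (n %/ k * size (win f c k))%N = n by rewrite size_win divnK.
apply: (eq_from_nth (x0 := f c)) => [|q]; first by rewrite size_flatten_nseq size_n size_win.
rewrite size_win => lt_q; rewrite nth_flatten_nseq ?size_n // size_win !nth_win ?ltn_mod //.
have -> : (c + Z.of_nat q = c + Z.of_nat (q %% k) + Z.of_nat (q %/ k) * Z.of_nat k)%Z.
  by rewrite {1}(divn_eq q k); lia.
by rewrite periodE ?periodM.
Qed.

Lemma eq_periodic_halfline f g (N : Z) c : (0 < N)%Z ->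
  shiftn N f = f -> shiftn N g = g ->
  (forall q : nat, f (c + Z.of_nat q)%Z = g (c + Z.of_nat q)%Z) -> f = g.
Proof.
move=> N_gt0 fN gN fg; apply: functional_extensionality => i.
set t := Z.abs (i - c).
have -> : i = (c + Z.of_nat (Z.to_nat (i - c + t * N)) + - t * N)%Z by nia.
by rewrite (periodE (periodM fN (- t))) (periodE (periodM gN (- t))) fg.
Qed.

Lemma win_power_period f c u v m : (0 < size u)%N ->
  shiftn (Z.of_nat (size u)) f = f -> win f c (size u) = u -> u = flatten (nseq m v) ->
  shiftn (Z.of_nat (size v)) f = f.
Proof.
move=> u_gt0 fu win_u Euv; have d := f c.
have size_u : size u = (m * size v)%N by rewrite Euv size_flatten_nseq.
have v_gt0 : (0 < size v)%N by move: u_gt0; rewrite size_u muln_gt0 => /andP[].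
have v_dvd : (size v %| size u)%N by rewrite size_u dvdn_mull.
have f_on_v (q : nat) : f (c + Z.of_nat q)%Z = nth d v (q %% size v).
  have -> : (c + Z.of_nat q
             = c + Z.of_nat (q %% size u) + Z.of_nat (q %/ size u) * Z.of_nat (size u))%Z.
    by rewrite {1}(divn_eq q (size u)); lia.
  have lt_qu : (q %% size u < size u)%N by rewrite ltn_mod.
  rewrite (periodE (periodM fu _)) -(@nth_win f c _ d _ lt_qu) win_u {1}Euv.
  by rewrite nth_flatten_nseq -?size_u // modn_dvdm.
apply/esym/(eq_periodic_halfline (N := Z.of_nat (size u)) (c := c)); first lia.
- exact: fu.
- by rewrite shiftn_add Z.add_comm -shiftn_add fu.
- move=> q; rewrite /shiftn (_ : c + Z.of_nat q + Z.of_nat (size v) = c + Z.of_nat (q + size v))%Z.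
    by rewrite !f_on_v modnDr.
  lia.
Qed.

Lemma win_proper_power f c (N : nat) p : (0 < N)%N ->
  shiftn (Z.of_nat N) f = f -> shiftn p f = f -> ~ (Z.of_nat N | p)%Z ->
  proper_power (win f c N).
Proof.
move=> N_gt0 fN fp N_ndvd; have fg := period_gcd fp fN.
have g_dvd_p := Z.gcd_divide_l p (Z.of_nat N).
have [t Et] := Z.gcd_divide_r p (Z.of_nat N).
have g_ge0 := Z.gcd_nonneg p (Z.of_nat N).
move: (Z.gcd p (Z.of_nat N)) fg g_dvd_p Et g_ge0 => g fg g_dvd_p Et g_ge0.
have g_neqN : g <> Z.of_nat N by move=> Eg; apply: N_ndvd; rewrite -Eg.
have g_gt0 : (0 < g)%Z.
  by case: (Z.eq_dec g 0) => [g0|]; [move: Et; rewrite g0 Z.mul_0_r; lia | lia].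
have t_ge2 : (2 <= t)%Z.
  by case: (Z.eq_dec t 1) => [t1|]; [case: g_neqN; rewrite Et t1; lia | nia].
have g_dvd : (Z.to_nat g %| N)%N by apply/dvdnP; exists (Z.to_nat t); nia.
exists (win f c (Z.to_nat g)), (N %/ Z.to_nat g)%N; split; first by have := divnK g_dvd; nia.
by apply: win_periodic_power; rewrite ?Z2Nat.id //; nia.
Qed.

Lemma perw_nth (a : T) w q : (q < (size w).+1)%N -> perw a w (Z.of_nat q) = nth a (a :: w) q.
Proof. by move=> lt_q; rewrite /perw Z.mod_small ?Nat2Z.id //; lia. Qed.

Lemma perw_period (a : T) w : shiftn (Z.of_nat (size w).+1) (perw a w) = perw a w.
Proof.
apply: functional_extensionality => i; rewrite /shiftn /perw.
by rewrite -(Z.mul_1_l (Z.of_nat _)) Z.mod_add ?Z.mul_1_l //; lia.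
Qed.

Lemma perw_win (a : T) w : win (perw a w) 0 (size w).+1 = a :: w.
Proof.
apply: (eq_from_nth (x0 := a)); rewrite size_win // => q lt_q.
by rewrite nth_win // perw_nth.
Qed.

Lemma perw_of_win f (a : T) w : shiftn (Z.of_nat (size w).+1) f = f ->
  win f 0 (size w).+1 = a :: w -> perw a w = f.
Proof.
move=> fN win_f; apply: (eq_periodic_halfline (N := Z.of_nat (size w).+1) (c := 0%Z)).
- lia.
- exact: perw_period.
- exact: fN.
- move=> q; rewrite /perw -win_f nth_win; last first.
    by have := Z.mod_pos_bound (0 + Z.of_nat q) (Z.of_nat (size w).+1); lia.
  rewrite Z2Nat.id; last by have := Z.mod_pos_bound (0 + Z.of_nat q) (Z.of_nat (size w).+1); lia.
  have N_gt0 : (0 < Z.of_nat (size w).+1)%Z by lia.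
  have := congr1 (fun g => g 0%Z) (period_mod (Z.of_nat q) N_gt0 fN).
  by rewrite /shiftn /=.
Qed.

End Words.

Lemma flatten_map_nseq (A B : Type) (s : A -> seq B) (v : seq A) m :
  flatten (map s (flatten (nseq m v))) = flatten (nseq m (flatten (map s v))).
Proof. by elim: m => //= m IHm; rewrite map_cat flatten_cat IHm. Qed.

Section SigmaWindows.
Variables (A B : Type) (s : A -> seq B).

Lemma sigZ_block x z i : sigZ s x z ->
  win z (cut (blen s x) (i - 1) + 1) (blen s x i) = s (x i).
Proof.
move=> xz; apply: (eq_from_nth (x0 := z 0%Z)) => [|q]; first by rewrite size_win.
by rewrite size_win => lt_q; rewrite nth_win // xz.
Qed.

Lemma size_sigZ_win x i0 n :
  Z.of_nat (size (flatten (map s (win x i0 n))))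
  = (cut (blen s x) (i0 + Z.of_nat n - 1) - cut (blen s x) (i0 - 1))%Z.
Proof.
elim: n => [|n IHn]; first by rewrite /win /= Z.add_0_r; lia.
rewrite win_rcons map_rcons flatten_rcons size_cat Nat2Z.inj_add IHn.
rewrite (cutS _ (i0 + Z.of_nat n.+1 - 1)) /blen.
by rewrite (_ : i0 + Z.of_nat n.+1 - 1 = i0 + Z.of_nat n)%Z; lia.
Qed.

Lemma sigZ_win x z i0 n : sigZ s x z ->
  win z (cut (blen s x) (i0 - 1) + 1) (size (flatten (map s (win x i0 n))))
  = flatten (map s (win x i0 n)).
Proof.
move=> xz; elim: n => [|n IHn]; first by rewrite /win.
rewrite win_rcons map_rcons flatten_rcons size_cat winD IHn; congr (_ ++ _).
have -> : (cut (blen s x) (i0 - 1) + 1 + Z.of_nat (size (flatten (map s (win x i0 n))))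
           = cut (blen s x) (i0 + Z.of_nat n - 1) + 1)%Z by rewrite size_sigZ_win; lia.
exact: sigZ_block.
Qed.

End SigmaWindows.

(** * Recognizability *)

Definition periods_lift (A B : Type) (s : A -> seq B) (X : (Z -> A) -> Prop) : Prop :=
  forall x z d, X x -> sigZ s x z -> shiftn d z = z ->
  exists i, shiftn i x = x /\ d = cut (blen s x) i.

Section Recognizability.
Variables (A : finType) (B : Type) (s : A -> seq B) (X : (Z -> A) -> Prop).
Hypotheses (s_ne : nonerasing s) (X_sub : subshift X).

Lemma sigZ_same_orbit x x' z z' :
  sigZ s x z -> sigZ s x' z' -> same_orbit x x' -> same_orbit z z'.
Proof.
move=> xz x'z' [j Ej]; exists (cut (blen s x) j); rewrite Ej in x'z'.
exact: sigZ_uniq x'z' (sigZ_shiftn xz).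
Qed.

Lemma sigZ_period_win x z (N : nat) : sigZ s x z -> shiftn (Z.of_nat N) x = x ->
  let u := flatten (map s (win x 0 N)) in
  [/\ Z.of_nat (size u) = cut (blen s x) (Z.of_nat N),
      shiftn (Z.of_nat (size u)) z = z & win z (cut (blen s x) (-1) + 1) (size u) = u].
Proof.
move=> xz xN u; have size_u : Z.of_nat (size u) = cut (blen s x) (Z.of_nat N).
  rewrite /u size_sigZ_win (_ : 0 + _ - 1 = -1 + Z.of_nat N)%Z; last lia.
  by rewrite cut_period //; change (0 - 1)%Z with (-1)%Z; lia.
by split=> //; [rewrite size_u; apply: sigZ_period | apply: sigZ_win].
Qed.

Lemma recognizable_orbit_injective : recognizable s X -> orbit_injective s X.
Proof.
move=> s_rec x x' z z' Xx Xx' xz x'z'; split; last exact: sigZ_same_orbit.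
move=> [j Ej]; have [i [k [lt_k xiz _ Ek]]] := sigZ_shiftn_offset s_ne j xz.
have Ez : shiftn (Z.of_nat k) (shiftn (cut (blen s x) i) z) = shiftn (Z.of_nat 0) z'.
  by rewrite Ek Ej shiftn0.
have [<- _] := s_rec _ _ _ _ k 0%N (subshift_shiftn i X_sub Xx) Xx' xiz x'z' lt_k (s_ne _) Ez.
by exists i.
Qed.

Lemma recognizable_periods_lift : recognizable s X -> periods_lift s X.
Proof.
move=> s_rec x z d Xx xz zd; have [i [k [lt_k xiz Edk Ek]]] := sigZ_shiftn_offset s_ne d xz.
have Ez : shiftn (Z.of_nat k) (shiftn (cut (blen s x) i) z) = shiftn (Z.of_nat 0) z.
  by rewrite Ek zd shiftn0.
have [xi k0] := s_rec _ _ _ _ k 0%N (subshift_shiftn i X_sub Xx) Xx xiz xz lt_k (s_ne _) Ez.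
by exists i; rewrite Edk k0 Z.add_0_r.
Qed.

Lemma orbit_injective_periods_lift_recognizable :
  orbit_injective s X -> periods_lift s X -> recognizable s X.
Proof.
move=> s_orb s_lift x x' z z' k l Xx Xx' xz x'z' lt_k lt_l Ekl.
have [j Ej] : same_orbit x x'.
  apply/(s_orb x x' z z' Xx Xx' xz x'z'); exists (- Z.of_nat l + Z.of_nat k)%Z.
  by rewrite -shiftn_add Ekl shiftnK.
rewrite Ej in Xx' x'z' lt_l *; have Ez' := sigZ_uniq s_ne x'z' (sigZ_shiftn (i := j) xz).
have zd : shiftn (Z.of_nat k - Z.of_nat l - cut (blen s x) j) z = z.
  move/(congr1 (shiftn (- (Z.of_nat l + cut (blen s x) j)))): Ekl.
  rewrite Ez' [shiftn (Z.of_nat l) _]shiftn_add shiftnK shiftn_add.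
  by rewrite (_ : _ - _ - _ = - (Z.of_nat l + cut (blen s x) j) + Z.of_nat k)%Z //; lia.
have [i [xi Ed]] := s_lift x z _ Xx xz zd.
have xji : shiftn j x = shiftn (j + i) x by rewrite -shiftn_add xi.
have cut_ji := cut_period s xi j.
have [ji0 ->] : (j + i)%Z = 0%Z /\ k = l.
  have lt_l' : (l < blen s x (j + i + 1))%N.
    by move: lt_l; rewrite xji /shiftn /blen (_ : 1 + (j + i) = j + i + 1)%Z //; lia.
  have Epos : (cut (blen s x) (1 - 1) + 1 + Z.of_nat k
               = cut (blen s x) (j + i + 1 - 1) + 1 + Z.of_nat l)%Z.
    by change (1 - 1)%Z with 0%Z; rewrite cut0 (_ : j + i + 1 - 1 = j + i)%Z ?cut_ji; lia.
  by have [? ->] := block_pos_inj (blen_gt0 s_ne x) lt_k lt_l' Epos; split=> //; lia.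
by rewrite xji ji0 shiftn0.
Qed.

Lemma periods_lift_period_preserving : periods_lift s X -> period_preserving s X.
Proof.
move=> s_lift a w Xx; split.
  by move=> [v [m [m_ge2 ->]]]; exists (flatten (map s v)), m; rewrite flatten_map_nseq.
move=> [v [m [m_ge2 Euv]]].
have xN : shiftn (Z.of_nat (size w).+1) (perw a w) = perw a w := perw_period a w.
have [z xz] := sigZ_ex s_ne (perw a w).
have [size_u zu] := sigZ_period_win xz xN; rewrite perw_win in size_u zu * => win_u.
have u_gt0 : (0 < size (flatten (map s (a :: w))))%N by rewrite /= size_cat; have := s_ne a; lia.
have [i [xi Ev]] := s_lift _ z _ Xx xz (win_power_period u_gt0 zu win_u Euv).
have size_u_v : size (flatten (map s (a :: w))) = (m * size v)%N by rewrite Euv size_flatten_nseq.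
have i_bounds : (0 < i < Z.of_nat (size w).+1)%Z.
  have cut_i : (0 < cut (blen s (perw a w)) i < cut (blen s (perw a w)) (Z.of_nat (size w).+1))%Z.
    by rewrite -Ev -size_u; nia.
  have cut_mono := cut_le (blen_gt0 s_ne (perw a w)).
  split; first by case: (Z.lt_ge_cases 0 i) => // /cut_mono; rewrite cut0; lia.
  by case: (Z.lt_ge_cases i (Z.of_nat (size w).+1)) => // /cut_mono; lia.
have := win_proper_power 0 (ltn0Sn _) xN xi; rewrite perw_win; apply.
by move/(Z.divide_pos_le _ _ (proj1 i_bounds)); lia.
Qed.

Lemma period_preserving_cut_dvd x z d : period_preserving s X -> X x -> sigZ s x z ->
  shiftn d z = z -> forall n, (0 < n)%N -> shiftn (Z.of_nat n) x = x ->
  exists q, [/\ (0 < q)%N, shiftn (Z.of_nat q) x = x & (cut (blen s x) (Z.of_nat q) | d)%Z].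
Proof.
move=> s_pp Xx xz zd n; elim/ltn_ind: n => n IHn n_gt0 xn.
have [size_u zu win_u] := sigZ_period_win xz xn.
have [|u_ndvd] := classic (cut (blen s x) (Z.of_nat n) | d)%Z; first by exists n.
have u_gt0 : (0 < size (flatten (map s (win x 0 n))))%N.
  have n_pos : (0 < Z.of_nat n)%Z by lia.
  by have := cut_lt (blen_gt0 s_ne x) n_pos; rewrite cut0; lia.
have u_pow := win_proper_power (cut (blen s x) (-1) + 1) u_gt0 zu zd.
rewrite win_u size_u in u_pow.
case Ew: (win x 0 n) u_pow => [|a w] u_pow; first by have := size_win x 0 n; rewrite Ew /=; lia.
have size_w : (size w).+1 = n by rewrite -(size_win x 0 n) Ew.
have x_perw : perw a w = x by apply: perw_of_win; rewrite size_w.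
have [v [m [m_ge2 Ev]]] := (s_pp a w ltac:(by rewrite x_perw)).2 (u_pow u_ndvd).
have xv : shiftn (Z.of_nat (size v)) x = x.
  have x_aw : shiftn (Z.of_nat (size (a :: w))) x = x by rewrite [size _]/= size_w.
  have win_aw : win x 0 (size (a :: w)) = a :: w by rewrite [size _]/= size_w.
  exact: (win_power_period (u := a :: w) (ltn0Sn (size w)) x_aw win_aw Ev).
have size_n : n = (m * size v)%N by rewrite -size_w -/(size (a :: w)) Ev size_flatten_nseq.
apply: (IHn (size v)) => //; nia.
Qed.

Lemma orbit_injective_period_preserving_lift :
  orbit_injective s X -> period_preserving s X -> periods_lift s X.
Proof.
move=> s_orb s_pp x z d Xx xz zd.
have [->|d_neq0] := Z.eq_dec d 0; first by exists 0%Z; rewrite shiftn0 cut0.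
have [q [q_neq0 xq]] := orbit_injective_periodic s_ne X_sub s_orb Xx xz d_neq0 zd.
have q_gt0 : (0 < Z.to_nat (Z.abs q))%N by lia.
have xq' : shiftn (Z.of_nat (Z.to_nat (Z.abs q))) x = x.
  by rewrite Z2Nat.id; [apply: period_abs | lia].
have [n [n_gt0 xn [t ->]]] := period_preserving_cut_dvd s_pp Xx xz zd q_gt0 xq'.
exists (t * Z.of_nat n)%Z; split; first exact: periodM.
by rewrite (cut_periodM s xn).
Qed.

Theorem recognizable_iff_orbit_injective_period_preserving :
  recognizable s X <-> orbit_injective s X /\ period_preserving s X.
Proof.
split=> [s_rec|[s_orb s_pp]].
- split; first exact: recognizable_orbit_injective.
  exact/periods_lift_period_preserving/recognizable_periods_lift.
- exact/orbit_injective_periods_lift_recognizable/orbit_injective_period_preserving_lift.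
Qed.

End Recognizability.

(** * The subdivision *)

Definition injective_on (T U : Type) (P : T -> Prop) (f : T -> U) : Prop :=
  forall y y', P y -> P y' -> f y = f y' -> y = y'.

Section Subdivision.
Variables (A B : Type) (s : A -> seq B).

Lemma size_pi_sub a : size (pi_sub s a) = size (s a).
Proof. by rewrite size_map size_enum_ord. Qed.

Lemma blen_pi_sub x : blen (pi_sub s) x = blen s x.
Proof. by apply: functional_extensionality => j; apply: size_pi_sub. Qed.

Lemma nth_pi_sub d a k (lt_k : (k < size (s a))%N) :
  nth d (pi_sub s a) k = existT _ a (Ordinal lt_k).
Proof.
rewrite (nth_map (Ordinal lt_k)) ?size_enum_ord //; congr existT.
by apply: val_inj; rewrite /= nth_enum_ord.
Qed.

Lemma alpha_letterE a (k : 'I_(size (s a))) b : alpha_letter (existT _ a k) = nth b (s a) k.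
Proof. by rewrite /alpha_letter (tnth_nth b). Qed.

Lemma sigZ_pi_sub_at x y i k (lt_k : (k < blen s x i)%N) : sigZ (pi_sub s) x y ->
  y (cut (blen s x) (i - 1) + 1 + Z.of_nat k)%Z = existT _ (x i) (Ordinal lt_k).
Proof.
move=> xy; have lt_k' : (k < size (pi_sub s (x i)))%N by rewrite size_pi_sub.
by have := xy i k lt_k'; rewrite -/(blen _ x) blen_pi_sub nth_pi_sub.
Qed.

Lemma sigZ_pi_sub_alpha x y : sigZ (pi_sub s) x y -> sigZ s x (alphaZ y).
Proof. by move=> xy i k lt_k; rewrite /alphaZ (sigZ_pi_sub_at lt_k xy); apply: alpha_letterE. Qed.

Hypothesis s_ne : nonerasing s.

Lemma pi_sub_nonerasing : nonerasing (pi_sub s).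
Proof. by move=> a; rewrite size_pi_sub. Qed.

Lemma sigZ_pi_sub_block x y i p : sigZ (pi_sub s) x y ->
  (cut (blen s x) (i - 1) < p <= cut (blen s x) i)%Z -> projT1 (y p) = x i.
Proof.
move=> xy; rewrite (cutS _ i) => p_in.
have [k [lt_k ->]] : exists k, (k < blen s x i)%N /\
    p = (cut (blen s x) (i - 1) + 1 + Z.of_nat k)%Z.
  by exists (Z.to_nat (p - cut (blen s x) (i - 1) - 1)); split; lia.
by rewrite (sigZ_pi_sub_at lt_k xy).
Qed.

(* The cuts of x and x' coincide: reading y forwards through first letters of blocks and
   backwards through last letters. *)
Lemma sigZ_pi_sub_inj x x' y : sigZ (pi_sub s) x y -> sigZ (pi_sub s) x' y -> x = x'.
Proof.
move=> xy x'y; have blen_x := blen_gt0 s_ne x; have blen_x' := blen_gt0 s_ne x'.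
have letter_eq i p : (cut (blen s x) (i - 1) < p <= cut (blen s x) i)%Z ->
    (cut (blen s x') (i - 1) < p <= cut (blen s x') i)%Z -> x i = x' i.
  by move=> p_x p_x'; rewrite -(sigZ_pi_sub_block xy p_x) (sigZ_pi_sub_block x'y p_x').
have Ecut i : cut (blen s x) i = cut (blen s x') i.
  elim/Z.peano_ind: i => [|i IHi|i IHi]; first by rewrite !cut0.
  - have E1 := cutS (blen s x) (Z.succ i); have E1' := cutS (blen s x') (Z.succ i).
    rewrite Z.sub_1_r Z.pred_succ in E1 E1'.
    have L1 := blen_x (Z.succ i); have L1' := blen_x' (Z.succ i).
    have Exi : x (Z.succ i) = x' (Z.succ i).
      by apply: (letter_eq _ (cut (blen s x) i + 1)%Z); rewrite Z.sub_1_r Z.pred_succ; lia.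
    have Eb : blen s x (Z.succ i) = blen s x' (Z.succ i) by rewrite /blen Exi.
    lia.
  - rewrite -Z.sub_1_r; have E0 := cutS (blen s x) i; have E0' := cutS (blen s x') i.
    have L0 := blen_x i; have L0' := blen_x' i.
    have Exi : x i = x' i by apply: (letter_eq _ (cut (blen s x) i)); lia.
    have Eb : blen s x i = blen s x' i by rewrite /blen Exi.
    lia.
apply: functional_extensionality => i; apply: (letter_eq i (cut (blen s x) i));
  by rewrite -?Ecut (cutS _ i); have := blen_x i; lia.
Qed.

Lemma sigZ_pi_sub_shift_inj x x' y y' k l :
  sigZ (pi_sub s) x y -> sigZ (pi_sub s) x' y' ->
  (k < size (s (x 1%Z)))%N -> (l < size (s (x' 1%Z)))%N ->
  shiftn (Z.of_nat k) y = shiftn (Z.of_nat l) y' -> x = x' /\ k = l.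
Proof.
move=> xy x'y' lt_k lt_l Eyy'.
have index_at x0 y0 k0 (lt_k0 : (k0 < blen s x0 1)%N) : sigZ (pi_sub s) x0 y0 ->
    nat_of_ord (projT2 (shiftn (Z.of_nat k0) y0 1%Z)) = k0.
  move=> x0y0; rewrite /shiftn (_ : 1 + Z.of_nat k0 = cut (blen s x0) (1 - 1) + 1 + Z.of_nat k0)%Z.
    by rewrite (sigZ_pi_sub_at lt_k0 x0y0).
  by change (1 - 1)%Z with 0%Z; rewrite cut0; lia.
have Ekl : k = l by rewrite -(index_at _ _ _ lt_k xy) Eyy' (index_at _ _ _ lt_l x'y').
subst l; split=> //; apply: sigZ_pi_sub_inj xy _.
by rewrite (shiftn_inj Eyy').
Qed.

End Subdivision.

Section SubdivisionRecognizability.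
Variables (A B : Type) (s : A -> seq B) (X : (Z -> A) -> Prop).
Hypotheses (s_ne : nonerasing s) (X_sub : subshift X).

Lemma recognizable_iff_alphaZ_injective :
  recognizable s X <-> injective_on (imageZ (pi_sub s) X) (@alphaZ A B s).
Proof.
have pi_ne := pi_sub_nonerasing s_ne; split.
- move=> s_rec y y' Iy Iy'.
  have [x [w [k [Xx xw lt_k ->]]]] := imageZ_canonical pi_ne X_sub Iy.
  have [x' [w' [k' [Xx' x'w' lt_k' ->]]]] := imageZ_canonical pi_ne X_sub Iy'.
  rewrite !size_pi_sub in lt_k lt_k' => Ey.
  have [Ex Ek] := s_rec x x' _ _ k k' Xx Xx' (sigZ_pi_sub_alpha xw) (sigZ_pi_sub_alpha x'w')
    lt_k lt_k' Ey.
  subst x' k'.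
  by rewrite (sigZ_uniq pi_ne xw x'w').
- move=> alpha_inj x x' z z' k l Xx Xx' xz x'z' lt_k lt_l Ez.
  have [w xw] := sigZ_ex pi_ne x; have [w' x'w'] := sigZ_ex pi_ne x'.
  apply: (sigZ_pi_sub_shift_inj s_ne xw x'w' lt_k lt_l); apply: alpha_inj.
  + by exists x, w, (Z.of_nat k).
  + by exists x', w', (Z.of_nat l).
  + rewrite /alphaZ -/(shiftn _ (alphaZ w)) -/(shiftn _ (alphaZ w')).
    rewrite (sigZ_uniq s_ne (sigZ_pi_sub_alpha xw) xz).
    by rewrite (sigZ_uniq s_ne (sigZ_pi_sub_alpha x'w') x'z').
Qed.

End SubdivisionRecognizability.

Section LetterToLetter.
Variables (A B : Type) (s : A -> seq B).

Lemma alpha_morph_nonerasing : nonerasing (@alpha_morph A B s).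
Proof. by []. Qed.

Lemma sigZ_alpha_morph y : sigZ (@alpha_morph A B s) y (alphaZ y).
Proof.
move=> i [|k] // _; rewrite (_ : (fun j => size (alpha_morph (y j))) = fun _ => 1%N) //.
by rewrite cut_const1 (_ : i - 1 + 1 + 0 = i)%Z //; lia.
Qed.

Lemma alpha_morph_recognizable_iff (P : (Z -> subdiv_alph s) -> Prop) :
  recognizable (@alpha_morph A B s) P <-> injective_on P (@alphaZ A B s).
Proof.
split=> [alpha_rec y y' Py Py' Ey | alpha_inj x x' z z' [|//] [|//] Px Px' xz x'z' _ _ Ez].
  by have [] := alpha_rec y y' _ _ 0%N 0%N Py Py' (sigZ_alpha_morph (y := y))
    (sigZ_alpha_morph (y := y')) erefl erefl (congr1 _ Ey).
rewrite !shiftn0 in Ez; subst z'; split=> //; apply: alpha_inj => //.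
by rewrite -(sigZ_uniq alpha_morph_nonerasing xz (sigZ_alpha_morph (y := x)))
  -(sigZ_uniq alpha_morph_nonerasing x'z' (sigZ_alpha_morph (y := x'))).
Qed.

End LetterToLetter.

Lemma letter_map_inverse_continuous (T : finType) (U : Type) (h : T -> U)
    (P : (Z -> T) -> Prop) :
  closedZ P -> injective_on P (fun y i => h (y i)) ->
  forall y, P y -> forall n, exists m, forall y', P y' ->
    agree m (fun i => h (y i)) (fun i => h (y' i)) -> agree n y y'.
Proof.
move=> P_closed h_inj y Py n; apply: NNPP => no_m.
have bad m : exists y',
    [/\ P y', agree m (fun i => h (y i)) (fun i => h (y' i)) & ~ agree n y y'].
  apply: NNPP => none; apply: no_m; exists m => y' Py' agr.
  by apply: NNPP => nagr; apply: none; exists y'.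
have [F HF] := choice _ bad.
have PF m : True -> P (F m) by case: (HF m).
have [y0 [Py0 Hy0]] := closed_cluster_point P_closed PF infinitely_often_T.
have Ey0 : y0 = y.
  apply: h_inj => //; apply: agree_all_eq => r i Hi.
  have [m [le_rm [_ Fy0]]] := Hy0 r r; have [_ hF _] := HF m.
  by rewrite -Fy0 // hF //; lia.
have [m [_ [_ Fy0]]] := Hy0 n 0%N; have [_ _ nagr] := HF m.
by apply: nagr; rewrite -Ey0; apply: agree_sym.
Qed.

Lemma recognizable_subshift_iso (A B : finType) (s : A -> seq B) (X : (Z -> A) -> Prop) :
  nonerasing s -> subshift X -> recognizable s X ->
  subshift_iso (imageZ (pi_sub s) X) (imageZ s X) (@alphaZ A B s).
Proof.
move=> s_ne X_sub s_rec; have pi_ne := pi_sub_nonerasing s_ne.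
have alpha_inj := (recognizable_iff_alphaZ_injective s_ne X_sub).1 s_rec.
split; [|split; [exact: alpha_inj | split; [|split; [by [] | split]]]].
- move=> y [x [w [j [Xx [xw ->]]]]].
  by exists x, (alphaZ w), j; split=> //; split=> //; apply: sigZ_pi_sub_alpha.
- move=> y [x [z [j [Xx [xz ->]]]]]; have [w xw] := sigZ_ex pi_ne x.
  exists (shiftn j w); split; first by exists x, w, j.
  by rewrite -(sigZ_uniq s_ne (sigZ_pi_sub_alpha xw) xz).
- by move=> y _ n; exists n => y' _ agr i Hi; rewrite /alphaZ agr.
- exact: letter_map_inverse_continuous (imageZ_subshift pi_ne X_sub).2.1 alpha_inj.
Qed.

Theorem proposition3p8 (A B : finType) (s : A -> seq B) (X : (Z -> A) -> Prop) :
  nonerasing s -> subshift X ->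
  (recognizable s X <-> subshift_iso (imageZ (pi_sub s) X) (imageZ s X) (@alphaZ A B s)) /\
  (recognizable s X <-> orbit_injective (@alpha_morph A B s) (imageZ (pi_sub s) X)
                        /\ period_preserving (@alpha_morph A B s) (imageZ (pi_sub s) X)) /\
  (recognizable s X <-> orbit_injective s X /\ period_preserving s X).
Proof.
move=> s_ne X_sub.
have piX_sub := imageZ_subshift (pi_sub_nonerasing s_ne) X_sub.
have rec_alpha_inj := recognizable_iff_alphaZ_injective s_ne X_sub.
split; [|split].
- split; first exact: recognizable_subshift_iso.
  by move=> [_ [alpha_inj _]]; apply/rec_alpha_inj.
- have alpha_ne := alpha_morph_nonerasing (s := s).
  rewrite -(recognizable_iff_orbit_injective_period_preserving alpha_ne piX_sub).
  by rewrite alpha_morph_recognizable_iff.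
- exact: recognizable_iff_orbit_injective_period_preserving.
Qed.
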